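(* Let $s\ge 2$ be an integer and let $A\in\mathbb{R}^{s\times s}$ be the strictly lower triangular matrix with $a_{ij}=\frac{1}{s-1}$ for all $1\le j<i\le s$ and $a_{ij}=0$ otherwise (this is the coefficient matrix of the optimal second-order method SSPERK$(s,2)$, whose weights are $b=\frac{1}{s}\mathbf e$). Consider the two weight vectors $$\tilde b_1=\Big[\tfrac{1}{s-1},\ldots,\tfrac{1}{s-1},0\Big],\qquad \tilde b_2=\Big[\tfrac{s+1}{s^2},\tfrac1s,\ldots,\tfrac1s,\tfrac{s-1}{s^2}\Big]$$ (in $\tilde b_1$ the first $s-1$ entries equal $\frac1{s-1}$; in $\tilde b_2$ the entries $2,\dots,s-1$ equal $\frac1s$). Then for $k=1,2$ the explicit Runge--Kutta method $(A,\tilde b_k)$ is of order one (i.e. $\tilde b_k^T\mathbf e=1$), it is non-defective in the sense that $\tilde b_k^Tc\neq\frac12$ where $c=A\mathbf e$, and its SSP coefficient equals $s-1$ (the SSP coefficient of SSPERK$(s,2)$).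
   Context: An explicit $s$-stage Runge--Kutta method with strictly lower triangular coefficient matrix $A$ and weight vector $b$ is denoted $(A,b)$; $\mathbf e=(1,\dots,1)^T$ and $c=A\mathbf e$. SSP coefficient: with $K=\begin{pmatrix}A&0\\ b^T&0\end{pmatrix}\in\mathbb{R}^{(s+1)\times(s+1)}$, the SSP coefficient of $(A,b)$ is $\mathcal C(A,b)=\sup\{r\ge 0:\ (I+rK)^{-1}\text{ exists},\ K(I+rK)^{-1}\ge 0,\ rK(I+rK)^{-1}\mathbf e\le \mathbf e\}$, inequalities taken componentwise. *)

From HB Require Import structures.
From mathcomp Require Import all_boot all_order all_algebra.
Set Implicit Arguments. Unset Strict Implicit. Unset Printing Implicit Defensive.
Import Order.TTheory GRing.Theory Num.Theory.
Local Open Scope ring_scope.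

Definition sspK (R : realFieldType) (s : nat) (A : 'M[R]_s) (b : 'cV[R]_s)
  : 'M[R]_(s + 1) := block_mx A 0 b^T 0.

Definition ssp_feasible (R : realFieldType) (s : nat) (A : 'M[R]_s) (b : 'cV[R]_s)
  (r : R) : Prop :=
  let K := sspK A b in
  let M := 1%:M + r *: K in
  [/\ 0 <= r,
      M \in unitmx,
      (forall i j, 0 <= (K *m invmx M) i j) &
      (forall i, ((r *: K) *m invmx M *m (const_mx 1 : 'cV[R]_(s + 1))) i 0 <= 1)].

Definition is_ssp_coef (R : realFieldType) (s : nat) (A : 'M[R]_s) (b : 'cV[R]_s)
  (C : R) : Prop :=
  (forall r, ssp_feasible A b r -> r <= C) /\
  (forall u, (forall r, ssp_feasible A b r -> r <= u) -> C <= u).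

Definition A_ssp2 (R : realFieldType) (s : nat) : 'M[R]_s :=
  \matrix_(i, j) (if (j < i)%N then (s.-1)%:R^-1 else 0).

Definition b1_tilde (R : realFieldType) (s : nat) : 'cV[R]_s :=
  \col_i (if (i < s.-1)%N then (s.-1)%:R^-1 else 0).

Definition b2_tilde (R : realFieldType) (s : nat) : 'cV[R]_s :=
  \col_i (if (i : nat) == 0%N then (s.+1)%:R / (s ^ 2)%:R
          else if (i : nat) == s.-1 then (s.-1)%:R / (s ^ 2)%:R
          else (s%:R)^-1).

From HB Require Import structures.
From mathcomp Require Import all_boot all_order all_algebra.
From mathcomp Require Import ring lra zify.
Set Implicit Arguments. Unset Strict Implicit. Unset Printing Implicit Defensive.
Import Order.TTheory GRing.Theory Num.Theory.
Local Open Scope ring_scope.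

(* With K = [[A, 0], [b^T, 0]], the matrix I + rK is block lower triangular, so
   the SSP conditions for (A, b) reduce to conditions on L = I + rA:
   A L^-1 >= 0, L^-1 e >= 0 (because r A L^-1 = I - L^-1), b^T L^-1 >= 0 and
   r b^T L^-1 e <= 1.  For A = A_ssp2 the first two rows of L v = e give
   v_1 = 1 - r/(s-1), hence r <= s-1.  At r = s-1, L is the lower triangular
   matrix of ones, whose inverse is I minus the subdiagonal shift: A L^-1 is a
   multiple of the shift, L^-1 e is the first unit vector and b^T L^-1 has
   entries b_j - b_(j+1).  So r = s-1 is feasible as soon as b is nonincreasing,
   nonnegative and (s-1) b_1 <= 1, which both weight vectors satisfy. *)

Lemma unitmx_lblock1 (R : comUnitRingType) (m n : nat) (L : 'M[R]_m) (C : 'M[R]_(n, m)) :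
  (block_mx L 0 C 1%:M \in unitmx) = (L \in unitmx).
Proof. by rewrite !unitmxE det_lblock det1 mulr1. Qed.

Lemma invmx_lblock1 (R : comUnitRingType) (m n : nat) (L : 'M[R]_m) (C : 'M[R]_(n, m)) :
  L \in unitmx ->
  invmx (block_mx L 0 C 1%:M) = block_mx (invmx L) 0 (- C *m invmx L) 1%:M.
Proof.
move=> Lu; set X := block_mx (invmx L) _ _ _.
have XM : X *m block_mx L 0 C 1%:M = 1%:M.
  rewrite mulmx_block mulVmx // -mulmxA mulVmx // !mulmx0 !mul0mx !mul1mx mulmx1.
  by rewrite !addr0 addNr add0r (scalar_mx_block m n).
have [_ Mu] := mulmx1_unit XM.
by rewrite -[LHS]mul1mx -XM mulmxK.
Qed.

Section FeasibilityByBlocks.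
Variables (R : realFieldType) (s : nat) (A : 'M[R]_s) (b : 'cV[R]_s) (r : R).

Local Notation L := (1%:M + r *: A).
Local Notation e := (const_mx 1 : 'cV[R]_s).

Lemma ssp_stage_mx_block : 1%:M + r *: sspK A b = block_mx L 0 (r *: b^T) 1%:M.
Proof.
by rewrite /sspK scale_block_mx (scalar_mx_block s 1) add_block_mx !scaler0 !addr0 add0r.
Qed.

Lemma sspK_mul_invmx : L \in unitmx ->
  sspK A b *m invmx (1%:M + r *: sspK A b)
  = block_mx (A *m invmx L) 0 (b^T *m invmx L) 0.
Proof.
move=> Lu; rewrite ssp_stage_mx_block invmx_lblock1 // /sspK mulmx_block.
by rewrite !mul0mx !mulmx0 !addr0.
Qed.

Lemma ssp_feasibleE : ssp_feasible A b r <->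
  [/\ 0 <= r, L \in unitmx,
      forall i j, 0 <= (A *m invmx L) i j,
      forall i, 0 <= (invmx L *m e) i 0 &
      (forall j, 0 <= (b^T *m invmx L) 0 j) /\ r * (b^T *m invmx L *m e) 0 0 <= 1].
Proof.
rewrite /ssp_feasible /= ssp_stage_mx_block unitmx_lblock1 -ssp_stage_mx_block.
have [Lu|] := boolP (L \in unitmx); last by split=> -[].
have rAL : r *: A *m invmx L = 1%:M - invmx L.
  by have := mulmxV Lu; rewrite mulmxDl mul1mx addrC => /(canRL (addrK _)).
rewrite -scalemxAl sspK_mul_invmx // -(col_mx_const s 1) scale_block_mx mul_block_col.
rewrite !scaler0 !mul0mx !addr0 scalemxAl rAL mulmxBl mul1mx -scalemxAl.
set P := A *m invmx L; set Q := b^T *m invmx L; set v := invmx L *m e.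
clearbody P Q v.
have nnegE : (forall i j, 0 <= (block_mx P 0 Q 0 : 'M_(s + 1)) i j) <->
             (forall i j, 0 <= P i j) /\ (forall j, 0 <= Q 0 j).
  split=> [Hb | [HP HQ] i j].
    split=> [i j | j]; first by have := Hb (lshift 1 i) (lshift 1 j); rewrite block_mxEul.
    by have := Hb (rshift s 0) (lshift 1 j); rewrite block_mxEdl.
  rewrite -(splitK i) -(splitK j).
  case: (split i) => i'; case: (split j) => j' /=;
    by rewrite ?block_mxEul ?block_mxEur ?block_mxEdl ?block_mxEdr ?ord1 ?HP ?HQ ?mxE.
have sumE : (forall i, (col_mx (e - v) (r *: (Q *m e)) : 'cV_(s + 1)) i 0 <= 1) <->
            (forall i, 0 <= v i 0) /\ r * (Q *m e) 0 0 <= 1.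
  split=> [Hc | [Hv HS] i].
    split=> [i | ]; first by have := Hc (lshift 1 i); rewrite col_mxEu !mxE; lra.
    by have := Hc (rshift s 0); rewrite col_mxEd mxE.
  rewrite -(splitK i); case: (split i) => i' /=.
    by rewrite col_mxEu !mxE; have := Hv i'; lra.
  by rewrite col_mxEd mxE ord1.
split=> [[r_ge0 _ /nnegE[HP HQ] /sumE[Hv HS]] | [r_ge0 _ HP Hv [HQ HS]]]; first by split.
by split=> //; [apply/nnegE | apply/sumE].
Qed.
End FeasibilityByBlocks.

Section LowerOnes.
Variables (R : comUnitRingType) (n : nat).

Definition lower_ones_mx : 'M[R]_n := \matrix_(i, j) ((j <= i)%N)%:R.
Definition subdiag_mx : 'M[R]_n := \matrix_(i, j) ((i : nat) == j.+1)%:R.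

Lemma subdiag_mul_lower_ones : subdiag_mx *m lower_ones_mx = lower_ones_mx - 1%:M.
Proof.
apply/matrixP=> i j; rewrite !mxE.
case: i => [[|i] lt_i_n] /=.
  rewrite big1 => [|k _]; last by rewrite !mxE mul0r.
  by case: j => [[|j] ?]; rewrite ?subrr ?subr0.
rewrite (bigD1 (Ordinal (ltnW lt_i_n))) //= !mxE eqxx mul1r big1 ?addr0 => [|k neq_k].
  by rewrite -val_eqE /= -[(j <= i)%N]ltnS eq_sym; case: ltngtP; rewrite ?subr0 ?subrr.
by move: neq_k; rewrite !mxE eqSS eq_sym -val_eqE /= => /negbTE ->; rewrite mul0r.
Qed.

Lemma lower_ones_left_inv : (1%:M - subdiag_mx) *m lower_ones_mx = 1%:M.
Proof. by rewrite mulmxBl mul1mx subdiag_mul_lower_ones opprB addrC subrK. Qed.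

Lemma lower_ones_unitmx : lower_ones_mx \in unitmx.
Proof. by case: (mulmx1_unit lower_ones_left_inv). Qed.

Lemma invmx_lower_ones : invmx lower_ones_mx = 1%:M - subdiag_mx.
Proof. by rewrite -[LHS]mul1mx -{1}lower_ones_left_inv mulmxK ?lower_ones_unitmx. Qed.

Lemma subdiag_mul_const (i : 'I_n) : (subdiag_mx *m (const_mx 1 : 'cV[R]_n)) i 0 = (0 < i)%N%:R.
Proof.
rewrite mxE; case: i => [[|i] lt_i_n] /=.
  by rewrite big1 // => k _; rewrite !mxE mul0r.
rewrite (bigD1 (Ordinal (ltnW lt_i_n))) //= !mxE eqxx mulr1 big1 ?addr0 // => k neq_k.
by move: neq_k; rewrite !mxE eqSS eq_sym -val_eqE /= => /negbTE ->; rewrite mul0r.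
Qed.
End LowerOnes.

Lemma row_mul_subdiag_le (R : realDomainType) (n : nat) (u : 'rV[R]_n) :
  (forall i j : 'I_n, (i <= j)%N -> u 0 j <= u 0 i) -> (forall i, 0 <= u 0 i) ->
  forall j, (u *m subdiag_mx R n) 0 j <= u 0 j.
Proof.
move=> u_antitone u_ge0 j; rewrite mxE.
have [lt_j1_n | le_n_j1] := ltnP j.+1 n.
  rewrite (bigD1 (Ordinal lt_j1_n)) //= !mxE eqxx mulr1 big1 ?addr0; first exact: u_antitone.
  by move=> k; rewrite !mxE -val_eqE /= => /negbTE ->; rewrite mulr0.
rewrite big1 // => k _; rewrite !mxE (_ : (k : nat) == j.+1 = false) ?mulr0 //.
by apply/negbTE; rewrite neq_ltn (leq_trans (ltn_ord k)).
Qed.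

Definition admissible_weights (R : realFieldType) (s : nat) (b : 'cV[R]_s) : Prop :=
  [/\ forall i j : 'I_s, (i <= j)%N -> b j 0 <= b i 0,
      forall i, 0 <= b i 0 &
      forall i, (s.-1)%:R * b i 0 <= 1].

Section SSPERK2.
Variables (R : realFieldType) (s : nat).

Local Notation e := (const_mx 1 : 'cV[R]_s).

Lemma A_ssp2_mulE (v : 'cV[R]_s) (i : 'I_s) :
  (A_ssp2 R s *m v) i 0 = (s.-1)%:R^-1 * \sum_(j < s | (j < i)%N) v j 0.
Proof.
rewrite mxE (big_mkcond (fun j : 'I_s => (j < i)%N)) mulr_sumr.
by apply: eq_bigr => j _; rewrite mxE; case: ifP; rewrite ?mul0r ?mulr0.
Qed.

Lemma A_ssp2_mul_const (i : 'I_s) : (A_ssp2 R s *m e) i 0 = i%:R / (s.-1)%:R.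
Proof.
rewrite A_ssp2_mulE mulrC; congr (_ * _).
rewrite (big_ord_narrow (ltnW (ltn_ord i))).
by under eq_bigr do rewrite mxE; rewrite sumr_const card_ord.
Qed.

Hypothesis lt1s : (1 < s)%N.

Let i0 : 'I_s := Ordinal (ltnW lt1s).
Let i1 : 'I_s := Ordinal lt1s.

Let s1_gt0 : 0 < (s.-1)%:R :> R.
Proof. by rewrite ltr0n -ltnS prednK // ltnW. Qed.

Lemma A_ssp2_feasible_le (b : 'cV[R]_s) (r : R) :
  ssp_feasible (A_ssp2 R s) b r -> r <= (s.-1)%:R.
Proof.
case/ssp_feasibleE => _ Lu _ v_ge0 _.
set L := 1%:M + r *: A_ssp2 R s in Lu v_ge0; set v := invmx L *m e in v_ge0.
have Lv i : v i 0 + r * (A_ssp2 R s *m v) i 0 = 1.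
  have := congr1 (fun w : 'cV[R]_s => w i 0) (mulKVmx Lu e).
  by rewrite -/v mulmxDl mul1mx -scalemxAl mxE [(r *: _ : 'cV_s) _ _]mxE [const_mx _ _ _]mxE.
have v0 : v i0 0 = 1.
  by have := Lv i0; rewrite A_ssp2_mulE big_pred0 // !mulr0 addr0.
have := Lv i1; rewrite A_ssp2_mulE (big_pred1 i0) => [|j]; last first.
  by rewrite /= -val_eqE /= ltnS leqn0.
rewrite v0 mulr1 => v1.
have : r / (s.-1)%:R <= 1 by have := v_ge0 i1; lra.
by rewrite ler_pdivrMr // mul1r.
Qed.

Lemma A_ssp2_lower_ones : A_ssp2 R s = (s.-1)%:R^-1 *: (lower_ones_mx R s - 1%:M).
Proof.
apply/matrixP=> i j; rewrite !mxE -val_eqE /=.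
by case: ltngtP => _; rewrite ?subr0 ?subrr ?mulr0 ?mulr1.
Qed.

Lemma stage_mx_A_ssp2 : 1%:M + (s.-1)%:R *: A_ssp2 R s = lower_ones_mx R s.
Proof.
by rewrite A_ssp2_lower_ones scalerA mulfV ?lt0r_neq0 // scale1r addrC subrK.
Qed.

Variable b : 'cV[R]_s.
Hypothesis b_admissible : admissible_weights b.

Lemma A_ssp2_feasible : ssp_feasible (A_ssp2 R s) b (s.-1)%:R.
Proof.
case: b_admissible => b_antitone b_ge0 b_le.
apply/ssp_feasibleE; rewrite stage_mx_A_ssp2 invmx_lower_ones.
have ve : (1%:M - subdiag_mx R s) *m e = \col_i (1 - (0 < (i : nat))%N%:R).
  apply/matrixP=> i j; rewrite ord1 mulmxBl mul1mx mxE [const_mx _ _ _]mxE.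
  by rewrite [(- _ : 'cV_s) _ _]mxE subdiag_mul_const mxE.
split; [exact: ltW | exact: lower_ones_unitmx | | |].
- move=> i j; rewrite A_ssp2_lower_ones -scalemxAl mulmxBl mul1mx.
  rewrite -{1}invmx_lower_ones mulmxV ?lower_ones_unitmx // opprB addrC subrK mxE.
  by apply: mulr_ge0; rewrite ?invr_ge0 ?(ltW s1_gt0) // mxE ler0n.
- by move=> i; rewrite ve mxE; case: (0 < (i : nat))%N; rewrite ?subrr ?subr0.
- split.
    move=> j; rewrite mulmxBr mulmx1 mxE [(- _ : 'rV_s) _ _]mxE subr_ge0.
    apply: row_mul_subdiag_le => [i k le_ik | i]; rewrite !mxE;
      [exact: b_antitone | exact: b_ge0].
  rewrite -mulmxA ve mxE (bigD1 i0) //= big1 ?addr0 => [|k neq_k0].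
    by rewrite !mxE subr0 mulr1; exact: b_le.
  by move: neq_k0; rewrite -val_eqE !mxE lt0n => ->; rewrite subrr mulr0.
Qed.

Lemma A_ssp2_ssp_coef : is_ssp_coef (A_ssp2 R s) b (s.-1)%:R.
Proof.
split=> [r | u]; first exact: A_ssp2_feasible_le.
by apply; exact: A_ssp2_feasible.
Qed.
End SSPERK2.

Lemma sum_ord_natr (R : pzRingType) (m : nat) :
  (\sum_(i < m) (i : nat)%:R) *+ 2 = m%:R * (m%:R - 1) :> R.
Proof.
have -> : m%:R * (m%:R - 1) = (m * m.-1)%:R :> R.
  by case: m => [|m]; rewrite ?mul0r // natrM -natr1 addrK.
rewrite -natr_sum -mulrnA; congr (_%:R).
elim: m => [|m IH]; first by rewrite big_ord0.
by rewrite big_ord_recr /= mulnDl IH; case: m {IH} => //= m; lia.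
Qed.

Section TildeWeights.
Variables (R : realFieldType) (s : nat).
Hypothesis lt1s : (1 < s)%N.

Local Notation c := (A_ssp2 R s *m (const_mx 1 : 'cV[R]_s)).

Lemma b1_tilde_sum : \sum_i b1_tilde R s i 0 = 1.
Proof.
case: s lt1s => [|[|n]] // _.
rewrite big_ord_recr /= !mxE ltnn addr0.
under eq_bigr => i _ do rewrite mxE /= ltn_ord.
by rewrite sumr_const card_ord -(mulr_natr (n.+1)%:R^-1) mulVf ?pnatr_eq0.
Qed.

Lemma b1_tilde_dot_c : \sum_i b1_tilde R s i 0 * c i 0 = 1 / 2 - (2 * (s.-1)%:R)^-1.
Proof.
case: s lt1s => [|[|n]] // _; have n_ge0 := ler0n R n.
rewrite big_ord_recr /= !mxE ltnn mul0r addr0.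
under eq_bigr => i _ do rewrite mxE /= ltn_ord A_ssp2_mul_const /= mulrCA.
rewrite -mulr_suml.
have sum_id := sum_ord_natr R n.+1; rewrite -mulr_natr -[n.+1%:R]natr1 addrK in sum_id.
rewrite (canRL (mulfK _) sum_id) ?pnatr_eq0 // -natr1.
by field; rewrite !lt0r_neq0 //; lra.
Qed.

Lemma b2_tilde_sum : \sum_i b2_tilde R s i 0 = 1.
Proof.
case: s lt1s => [|[|n]] // _; have n_ge0 := ler0n R n.
rewrite big_ord_recl big_ord_recr /= !mxE !lift0 /= eqxx.
under eq_bigr => i _ do rewrite mxE lift0 /= eqSS (ltn_eqF (ltn_ord i)).
rewrite sumr_const card_ord -(mulr_natr (n.+2)%:R^-1) natrX -!natr1.
by field; rewrite !lt0r_neq0 //; lra.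
Qed.

Lemma b2_tilde_dot_c : \sum_i b2_tilde R s i 0 * c i 0 = 1 / 2 - (s%:R ^+ 2)^-1.
Proof.
case: s lt1s => [|[|n]] // _; have n_ge0 := ler0n R n.
rewrite big_ord_recl big_ord_recr !A_ssp2_mul_const /= !mxE !lift0 /=.
rewrite eqxx mul0r mulr0 add0r.
under eq_bigr => i _ do
  rewrite A_ssp2_mul_const mxE lift0 /= eqSS (ltn_eqF (ltn_ord i)) -[i.+1%:R]natr1 mulrCA.
rewrite /bump leq0n add1n divff ?pnatr_eq0 // mulr1 -mulr_suml big_split /= sumr_const card_ord.
have sum_id := sum_ord_natr R n; rewrite -mulr_natr in sum_id.
rewrite (canRL (mulfK _) sum_id) ?pnatr_eq0 // natrX -!natr1.
by field; rewrite !lt0r_neq0 //; lra.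
Qed.

Lemma b1_tilde_admissible : admissible_weights (b1_tilde R s).
Proof.
have ge0 i : 0 <= b1_tilde R s i 0 by rewrite mxE; case: ifP; rewrite ?invr_ge0.
split=> // [i j le_ij | i]; rewrite !mxE.
  by case: ifP => [lt_j | _]; [rewrite (leq_ltn_trans le_ij lt_j) | have := ge0 i; rewrite mxE].
case: ifP => _; last by rewrite mulr0 ler01.
by rewrite mulfV // pnatr_eq0 -lt0n -ltnS prednK // ltnW.
Qed.

Lemma b2_tilde_admissible : admissible_weights (b2_tilde R s).
Proof.
case: s lt1s => [|[|n]] // _; have n_ge0 := ler0n R n.
set y : R := ((n.+2)%:R ^+ 2)^-1.
have y_gt0 : 0 < y by rewrite invr_gt0 exprn_gt0 // ltr0n.
have bE i : b2_tilde R n.+2 i 0 = (if (i : nat) == 0%N then n.+3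
                                   else if (i : nat) == n.+1 then n.+1 else n.+2)%:R * y.
  rewrite mxE /= natrX; case: ifP => _ //; case: ifP => _ //.
  by rewrite /y; field; rewrite !lt0r_neq0 //; lra.
have b_le i : b2_tilde R n.+2 i 0 <= (n.+3)%:R * y.
  by rewrite bE ler_pM2r // ler_nat; repeat case: ifP => _; lia.
have b_ge i : (n.+1)%:R * y <= b2_tilde R n.+2 i 0.
  by rewrite bE ler_pM2r // ler_nat; repeat case: ifP => _; lia.
split=> [i j le_ij | i | i].
- have [i0 | i_neq0] := eqVneq (i : nat) 0%N; first by rewrite [X in _ <= X]bE i0; exact: b_le.
  have [jl | j_neq] := eqVneq (j : nat) n.+1; first by rewrite [X in X <= _]bE jl eqxx; exact: b_ge.
  have j_neq0 : (j : nat) != 0%N by lia.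
  have i_neql : (i : nat) != n.+1 by have := ltn_ord j; lia.
  by rewrite !bE (negbTE i_neq0) (negbTE j_neq) (negbTE j_neq0) (negbTE i_neql).
- exact: le_trans (mulr_ge0 (ler0n _ _) (ltW y_gt0)) (b_ge i).
- apply: le_trans (ler_wpM2l (ler0n _ _) (b_le i)) _.
  have -> : (n.+2.-1)%:R * ((n.+3)%:R * y) = 1 - y :> R.
    by rewrite /y -!natr1; field; rewrite !lt0r_neq0 //; lra.
  by rewrite gerBl ltW.
Qed.
End TildeWeights.

Theorem mainTheorem1 (R : realFieldType) (s : nat) (hs : (2 <= s)%N) :
  forall bt : 'cV[R]_s, bt = b1_tilde R s \/ bt = b2_tilde R s ->
    let A := A_ssp2 R s in
    let c := A *m (const_mx 1 : 'cV[R]_s) in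
    [/\ \sum_i bt i 0 = 1,
        \sum_i bt i 0 * c i 0 != 1 / 2 &
        is_ssp_coef A bt (s.-1)%:R].
Proof.
have half_sub_neq (x : R) : 0 < x -> 1 / 2 - x != 1 / 2.
  by move=> x_gt0; rewrite -subr_eq0 addrAC subrr add0r oppr_eq0 gt_eqF.
have s1_gt0 : 0 < (s.-1)%:R :> R by rewrite ltr0n; lia.
move=> bt [->|->] A c; split; rewrite /c /A.
- exact: b1_tilde_sum.
- by rewrite b1_tilde_dot_c // half_sub_neq // invr_gt0 mulr_gt0.
- exact: A_ssp2_ssp_coef (b1_tilde_admissible _ hs).
- exact: b2_tilde_sum.
- by rewrite b2_tilde_dot_c // half_sub_neq // invr_gt0 exprn_gt0 // ltr0n; lia.
- exact: A_ssp2_ssp_coef (b2_tilde_admissible _ hs).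
Qed.
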